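(* Let $V$ be a finite set, $\mathcal{F}\subseteq 2^V$ a minimal hereditary family with $\delta(\mathcal{F})\ge 12$, and $x\in V$ with $f_3(x)=1$ and $f_1(x)=4$. Write $\mathcal{Q}(x)=\{Q\}$ with $Q=\{x,y_1,y_2,y_3\}$ and $N(x)=\{x,y_1,y_2,y_3,z\}$. Then: (1) $\mathcal{F}(x)=2^{\{y_1,y_2,y_3\}}\cup\{\{z\}\}\cup\{\{y_i,z\}: i\in[3]\}$; in particular $N(x)\subseteq N(z)$ and $N(x)\subseteq N(y_i)$ for all $i\in[3]$; (2) $c(Q)=0$; (3) $u(x)=5.3$.
   Context: Let $V$ be a finite set. A family $\mathcal{F}\subseteq 2^V$ is hereditary if $F'\subseteq F\in\mathcal{F}$ implies $F'\in\mathcal{F}$. For $x\in V$: the link is $\mathcal{F}(x)=\{F\setminus\{x\}: x\in F\in\mathcal{F}\}$, $d_{\mathcal{F}}(x)=|\mathcal{F}(x)|$, $\delta(\mathcal{F})=\min_{x\in V}d_{\mathcal{F}}(x)$, and the neighborhood is $N(x)=\bigcup_{x\in F\in\mathcal{F}}F$. For $A\subseteq V$, $d_{\mathcal{F}}(A)=|\{F\in\mathcal{F}: A\subseteq F\}|$. A set $F\in\mathcal{F}$ is maximal if no other member strictly contains it; a hereditary $\mathcal{F}$ with $\delta(\mathcal{F})\ge 12$ is minimal if $\delta(\mathcal{F}\setminus\{F\})\le 11$ for every maximal $F\in\mathcal{F}$. $f_i(x)$ denotes the number of $i$-element sets in $\mathcal{F}(x)$. A vertex $x$ is mini-weight if $f_1(x)=4$,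 $f_2(x)=5$, $f_3(x)=2$. $\mathcal{Q}=\{Q\in\mathcal{F}:|Q|=4\}$, $\mathcal{Q}(x)=\{Q\in\mathcal{Q}: x\in Q\}$, and for $Q\in\mathcal{Q}$, $c(Q)$ is the number of mini-weight vertices in $Q$. Weights: for $x\in F\in\mathcal{F}$ define $\omega(x,F)$ as follows. If $|F|\ne 3$, $\omega(x,F)=1/|F|$. If $|F|=3$: if $F$ is contained in some 4-element member of $\mathcal{F}$, every element of $F$ gets $\omega=1/3$; otherwise order the three 2-subsets of $F$ as $e_1,e_2,e_3$ with $d_{\mathcal{F}}(e_1)\le d_{\mathcal{F}}(e_2)\le d_{\mathcal{F}}(e_3)$; if $d_{\mathcal{F}}(e_2)\le 4<d_{\mathcal{F}}(e_3)$, the two elements of $e_3$ get $\omega=7/20$ and the element of $F\setminus e_3$ gets $6/20$; else if $d_{\mathcal{F}}(e_1)\le 4<d_{\mathcal{F}}(e_2)$, the two elements of $e_1$ get $7/20$ and the element of $F\setminus e_1$ gets $6/20$; otherwise every element of $F$ gets $1/3$. The weight of $x$ is $u(x)=\sum_{x\in F\in\mathcal{F}}\omega(x,F)$. *)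

From HB Require Import structures.
From mathcomp Require Import all_boot all_order all_algebra.
Set Implicit Arguments. Unset Strict Implicit. Unset Printing Implicit Defensive.
Import Order.TTheory GRing.Theory Num.Theory.

Section Defs.
Variable T : finType.
Implicit Types (F : {set {set T}}) (A B : {set T}) (x : T).

Definition hereditary F : Prop :=
  forall A B, A \in F -> B \subset A -> B \in F.

Definition link F x : {set {set T}} := [set A :\ x | A in [set B in F | x \in B]].

Definition deg F x : nat := #|link F x|.

Definition min_deg_ge F k : Prop := forall x, k <= deg F x.

Definition nbhd F x : {set T} := \bigcup_(A in F | x \in A) A.

Definition degS F A : nat := #|[set B in F | A \subset B]|.

Definition is_maximal F A : Prop :=
  A \in F /\ forall B, B \in F -> A \subset B -> B = A.

Definition minimal12 F : Prop :=
  [/\ hereditary F, min_deg_ge F 12 &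
      forall M, is_maximal F M -> exists v, deg (F :\ M) v <= 11].

Definition fi F i x : nat := #|[set A in link F x | #|A| == i]|.

Definition mini_weight F x : bool :=
  [&& fi F 1 x == 4, fi F 2 x == 5 & fi F 3 x == 2].

Definition Qs F : {set {set T}} := [set A in F | #|A| == 4].
Definition Qx F x : {set {set T}} := [set A in Qs F | x \in A].
Definition cQ F (Q : {set T}) : nat := #|[set v in Q | mini_weight F v]|.

Local Open Scope ring_scope.

Definition n_big F A : nat := #|[set e : {set T} | (e \subset A) && (#|e| == 2)%N && (4 < degS F e)%N]|.

Definition omega F x A : rat :=
  if #|A| != 3%N then (#|A|%:R)^-1
  else if [exists B in F, (A \subset B) && (#|B| == 4%N)] then 1/3
  else if n_big F A == 1%N then
    (* d(e2) <= 4 < d(e3): elements of e3 (the unique 2-subset with d > 4) get 7/20 *)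
    (if [exists e : {set T}, [&& e \subset A, #|e| == 2%N, (4 < degS F e)%N & x \in e]]
     then 7/20 else 6/20)
  else if n_big F A == 2%N then
    (* d(e1) <= 4 < d(e2): elements of e1 (the unique 2-subset with d <= 4) get 7/20 *)
    (if [exists e : {set T}, [&& e \subset A, #|e| == 2%N, (degS F e <= 4)%N & x \in e]]
     then 7/20 else 6/20)
  else 1/3.

Definition weight F x : rat := \sum_(A in F | x \in A) omega F x A.

End Defs.

(* The link of [x] lives on [N(x) \ x = {y1, y2, y3, z}] and contains every subset of
   [Y = {y1, y2, y3}], because [x |: Y] is the 4-set through [x]; moreover [z] is not in
   [x |: Y], otherwise the link would lie in [2^Y], which has only 8 members.  Since [Y]
   is the only triangle of the link, a member containing [z] meets [Y] in at most one
   point, so the link lies in [2^Y ∪ {{z}} ∪ {{y, z} : y ∈ Y}], a family of exactly 12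
   sets, and the degree bound forces equality.
   A mini-weight [y ∈ Y] would have a second triangle in its link, which must avoid [x];
   its three edges and the edges [{x, w}], [w ∈ {z} ∪ Y \ y], are six edges of the link
   of [y], not five.  Finally [u(x) = Σ_(B ⊆ Y) 1/(|B|+1) + 1/2 + 3 * 7/20]: each
   triangle [{x, y, z}] lies in no 4-set and has the heavy edge [{x, y}] (degree 5) and
   the light edge [{x, z}] (degree 4). *)

From HB Require Import structures.
From mathcomp Require Import all_boot all_order all_algebra.
Import Order.TTheory GRing.Theory Num.Theory.
Set Implicit Arguments. Unset Strict Implicit. Unset Printing Implicit Defensive.

Section Families.
Variable T : finType.
Implicit Types (F : {set {set T}}) (A B e Y : {set T}) (v w x y z : T).

Lemma mem_link F v B : (B \in link F v) = (v \notin B) && (v |: B \in F).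
Proof.
apply/imsetP/andP => [[A] | [vB FB]].
  by rewrite inE => /andP [FA vA] ->; rewrite setD11 setD1K.
by exists (v |: B); [rewrite inE FB setU11 | rewrite setU1K].
Qed.

Lemma link_hereditary F v : hereditary F -> hereditary (link F v).
Proof.
move=> F_her A B; rewrite !mem_link => /andP [vA FA] BA.
rewrite (contra (subsetP BA v)) //=.
exact: (F_her _ _ FA (setUS [set v] BA)).
Qed.

Lemma mem_nbhd F v w A : A \in F -> v \in A -> w \in A -> w \in nbhd F v.
Proof. by move=> FA vA wA; apply/bigcupP; exists A; rewrite ?FA ?vA. Qed.

Lemma degS_link F v e :
  v \notin e -> degS F (v |: e) = #|[set B in link F v | e \subset B]|.
Proof.
move=> ve; rewrite /degS.
have -> : [set A in F | v |: e \subset A]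
          = [set v |: B | B in [set B in link F v | e \subset B]].
  apply/setP => A; rewrite inE; apply/andP/imsetP => [[FA] | [B]].
    rewrite subUset sub1set => /andP [vA eA]; exists (A :\ v); last by rewrite setD1K.
    by rewrite inE mem_link setD11 setD1K // FA subsetD1 eA.
  by rewrite inE mem_link => /andP [/andP [_ FvB] eB] ->; rewrite FvB setUS.
apply: card_in_imset => B1 B2; rewrite !inE !mem_link.
by case/andP => /andP [vB1 _] _ /andP [/andP [vB2 _] _] /(congr1 (fun A => A :\ v));
  rewrite !setU1K.
Qed.

Lemma card_powerset_mem A a :
  a \in A -> #|[set B in powerset A | a \in B]| = (2 ^ #|A|.-1)%N.
Proof.
move=> aA; have -> : [set B in powerset A | a \in B]
                     = [set a |: B | B in powerset (A :\ a)].
  apply/setP => B; rewrite inE powersetE; apply/andP/imsetP => [[BA aB] | [C]].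
    by exists (B :\ a); rewrite ?powersetE ?setSD ?setD1K.
  by rewrite powersetE subsetD1 => /andP [CA aC] ->; rewrite setU11 subUset sub1set aA CA.
rewrite card_in_imset ?card_powerset ?(cardsD1 a A) ?aA //.
move=> C1 C2; rewrite !powersetE !subsetD1 => /andP [_ aC1] /andP [_ aC2].
by move/(congr1 (fun B => B :\ a)); rewrite !setU1K.
Qed.

Lemma set2l_inj y1 y2 z : y1 != z -> [set y1; z] = [set y2; z] -> y1 = y2.
Proof.
by move=> y1z E; have := set21 y1 z; rewrite E !inE (negbTE y1z) orbF => /eqP.
Qed.

Definition link_shape Y z : {set {set T}} :=
  powerset Y :|: [set [set z]] :|: [set [set y; z] | y in Y].

Lemma disjoint_link_shape Y z : z \notin Y ->
  [disjoint powerset Y & [set z] |: [set [set y; z] | y in Y]].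
Proof.
move=> zY; rewrite disjoints_subset; apply/subsetP => B; rewrite powersetE inE => BY.
apply: contraNN zY; rewrite !inE => /orP [/eqP BE | /imsetP [y _ BE]];
  by apply: (subsetP BY); rewrite BE !inE eqxx ?orbT.
Qed.

Lemma set1_notin_pairs Y z : z \notin Y -> [set z] \notin [set [set y; z] | y in Y].
Proof.
move=> zY; apply/imsetP => -[y yY E]; have := set21 y z; rewrite -E inE => /eqP yz.
by rewrite -yz yY in zY.
Qed.

Lemma pairs_inj Y z : z \notin Y -> {in Y &, injective (fun y => [set y; z])}.
Proof. by move=> zY y1 y2 y1Y _; apply: set2l_inj; apply: contraNneq zY => <-. Qed.

Lemma card_set1_pairs Y z : z \notin Y ->
  #|[set z] |: [set [set y; z] | y in Y]| = #|Y|.+1.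
Proof.
by move=> zY; rewrite cardsU1 set1_notin_pairs // card_in_imset //; exact: pairs_inj.
Qed.

Lemma card_link_shape Y z : z \notin Y -> #|link_shape Y z| = (2 ^ #|Y| + #|Y|.+1)%N.
Proof.
move=> zY; rewrite /link_shape -setUA cardsU (disjoint_setI0 (disjoint_link_shape zY)).
by rewrite cards0 subn0 card_powerset card_set1_pairs.
Qed.

Local Open Scope ring_scope.

Lemma sum_powerset_card (R : nmodType) A (f : nat -> R) :
  \sum_(B in powerset A) f #|B| = \sum_(k < #|A|.+1) f k *+ 'C(#|A|, k).
Proof.
rewrite (partition_big (fun B => inord #|B| : 'I_#|A|.+1) xpredT) //=.
apply: eq_bigr => k _; rewrite -cards_draws -sumr_const.
have cardBK B : B \subset A -> #|B| = (inord #|B| : 'I_#|A|.+1) :> nat.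
  by move=> BA; rewrite inordK // ltnS subset_leq_card.
apply: eq_big => B; last by rewrite powersetE => /andP [/cardBK {2}-> /eqP ->].
rewrite !inE; apply: andb_id2l => /cardBK BA.
by apply/eqP/eqP => [<- // | Bk]; apply: val_inj; rewrite /= -Bk.
Qed.

Lemma weight_link F v : weight F v = \sum_(B in link F v) omega F v (v |: B).
Proof.
rewrite /weight /link big_imset /=; last first.
  move=> A1 A2; rewrite !inE => /andP [_ vA1] /andP [_ vA2] A12.
  by rewrite -(setD1K vA1) A12 setD1K.
by apply: eq_big => A; rewrite ?inE // => /andP [_ vA]; rewrite setD1K.
Qed.

Lemma omega_card_neq3 F v A : #|A| != 3%N -> omega F v A = #|A|%:R^-1.
Proof. by rewrite /omega => ->. Qed.

Lemma omega_sub_card4 F v A Q :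
  Q \in F -> #|Q| = 4%N -> A \subset Q -> omega F v A = #|A|%:R^-1.
Proof.
move=> FQ Q4 AQ; rewrite /omega; case: ifP => // /negbFE /eqP A3.
suff -> : [exists B in F, (A \subset B) && (#|B| == 4%N)] by rewrite A3 div1r.
by apply/existsP; exists Q; rewrite FQ AQ Q4 eqxx.
Qed.

Lemma two_subsets3 p q r e : e \subset [set p; q; r] -> #|e| = 2%N ->
  [\/ e = [set p; q], e = [set p; r] | e = [set q; r]].
Proof.
move=> sub /eqP/cards2P [u [w [uw def_e]]]; move: sub uw.
rewrite def_e subUset !sub1set !inE -!orbA.
case/andP => /or3P [] /eqP -> /or3P [] /eqP ->; rewrite ?eqxx // => _;
  by [constructor 1 | constructor 2 | constructor 3
     | constructor 1; rewrite setUC | constructor 2; rewrite setUC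
     | constructor 3; rewrite setUC].
Qed.

(* Whatever the degree of the third edge [{a, z}], [x] lies on the distinguished
   edge: the only heavy one [{x, a}], or the only light one [{x, z}]. *)
Lemma omega_triangle_heavy_light F x a z : x != a -> x != z -> a != z ->
  ~~ [exists B in F, ([set x; a; z] \subset B) && (#|B| == 4%N)] ->
  (4 < degS F [set x; a])%N -> (degS F [set x; z] <= 4)%N ->
  omega F x [set x; a; z] = 7 / 20.
Proof.
move=> xa xz az free heavy_xa light_xz.
have xa_az : [set x; a] != [set a; z].
  by apply/eqP => E; have := set21 x a; rewrite E !inE (negbTE xa) (negbTE xz).
have sub_xa : [set x; a] \subset [set x; a; z] by rewrite subsetUl.
have sub_xz : [set x; z] \subset [set x; a; z].
  by rewrite subUset !sub1set !inE !eqxx orbT.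
have sub_az : [set a; z] \subset [set x; a; z].
  by rewrite subUset !sub1set !inE !eqxx !orbT.
have heavyE :
    [set e : {set T} | (e \subset [set x; a; z]) && (#|e| == 2%N) && (4 < degS F e)%N]
    = [set [set x; a]] :|: [set e in [set [set a; z]] | (4 < degS F e)%N].
  apply/setP => e; rewrite !inE; apply/idP/idP => [/andP [/andP [sub /eqP e2] he]|].
    move: he; case: (two_subsets3 sub e2) => -> he; rewrite ?eqxx ?he ?orbT //.
    by move: light_xz; rewrite leqNgt he.
  by case/orP => [/eqP -> | /andP [/eqP -> ->]]; rewrite ?sub_xa ?sub_az ?cards2 ?xa ?az.
rewrite /omega -setUA cardsU1 cards2 !inE negb_or xa xz az /= setUA (negbTE free).
rewrite /n_big heavyE; case: (boolP (4 < degS F [set a; z])%N) => heavy_az.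
  have -> : [set e in [set [set a; z]] | (4 < degS F e)%N] = [set [set a; z]].
    by apply/setP => e; rewrite !inE andb_idr // => /eqP ->.
  rewrite cards2 xa_az /=; case: ifP => // /existsP []; exists [set x; z].
  by rewrite sub_xz cards2 xz light_xz set21.
have -> : [set e in [set [set a; z]] | (4 < degS F e)%N] = set0.
  by apply/setP => e; rewrite !inE; apply/andP => -[/eqP ->]; apply/negP.
rewrite setU0 cards1 /=; case: ifP => // /existsP []; exists [set x; a].
by rewrite sub_xa cards2 xa heavy_xa set21.
Qed.

End Families.

Section Configuration.
Variables (T : finType) (F : {set {set T}}) (x z : T) (Y : {set T}).
Hypotheses (F_her : hereditary F) (deg_x : (12 <= deg F x)%N)
  (f3_x : fi F 3 x = 1%N) (card_Y_le3 : (#|Y| <= 3)%N)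
  (Qx_x : Qx F x = [set x |: Y]) (nbhd_x : nbhd F x \subset x |: (z |: Y)).

Lemma QxE C : [&& C \in F, #|C| == 4%N & x \in C] = (C == x |: Y).
Proof. by rewrite -in_set1 -Qx_x !inE andbA. Qed.

Lemma Q_in_F : x |: Y \in F.
Proof. by move: (eqxx (x |: Y)); rewrite -QxE => /and3P []. Qed.

Lemma card_Q : #|x |: Y| = 4%N.
Proof. by move: (eqxx (x |: Y)); rewrite -QxE => /and3P [_ /eqP]. Qed.

Lemma x_notin_Y : x \notin Y.
Proof.
by move: card_Q card_Y_le3; rewrite cardsU1; case: (x \notin Y) => //; rewrite add0n => ->.
Qed.

Lemma card_Y : #|Y| = 3%N.
Proof. by move: card_Q; rewrite cardsU1 x_notin_Y => -[]. Qed.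

Lemma x_notin_link B : B \in link F x -> x \notin B.
Proof. by rewrite mem_link => /andP []. Qed.

Lemma Y_in_link : Y \in link F x.
Proof. by rewrite mem_link x_notin_Y Q_in_F. Qed.

Lemma link_sub_zY B : B \in link F x -> B \subset z |: Y.
Proof.
move=> BL; have := BL; rewrite mem_link => /andP [xB FB].
apply/subsetP => w wB; have := subsetP nbhd_x w (mem_nbhd FB (setU11 x B) (setU1r x wB)).
by rewrite in_setU1 => /orP [/eqP wx | //]; rewrite -wx wB in xB.
Qed.

Lemma z_notin_Q : z \notin x |: Y.
Proof.
apply/negP => zQ; suff : link F x \subset powerset Y.
  by move/subset_leq_card; rewrite card_powerset card_Y; apply/negP; rewrite -ltnNge;
    exact: leq_trans deg_x.
apply/subsetP => B BL; rewrite powersetE; apply/subsetP => w wB.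
have /(subsetP (link_sub_zY BL)) := wB; rewrite in_setU1 => /orP [/eqP wz | //].
move: zQ; rewrite -wz in_setU1 => /orP [/eqP wx | //].
by have := x_notin_link BL; rewrite -wx wB.
Qed.

Lemma x_neq_z : x != z.
Proof. by apply: contraNneq z_notin_Q => <-; rewrite setU11. Qed.

Lemma link_card3_eq C : C \in link F x -> #|C| = 3%N -> C = Y.
Proof.
move: f3_x => /eqP/cards1P [A0 S3E] CL C3.
have : Y \in [set A in link F x | #|A| == 3%N] by rewrite inE Y_in_link card_Y.
have : C \in [set A in link F x | #|A| == 3%N] by rewrite inE CL C3.
by rewrite S3E !inE => /eqP -> /eqP ->.
Qed.

Lemma z_notin_Y : z \notin Y.
Proof. by move: z_notin_Q; rewrite in_setU1 negb_or => /andP []. Qed.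

(* Two points of [B :\ z] would span with [z] a triangle of the link other than [Y]. *)
Lemma link_setD1z_card_le1 B : B \in link F x -> z \in B -> (#|B :\ z| <= 1)%N.
Proof.
move=> BL zB; rewrite leqNgt; apply/card_gt1P => -[p [q []]].
rewrite !in_setD1 => /andP [pz pB] /andP [qz qB] pq.
have CL : [set z; p; q] \in link F x.
  by apply: (link_hereditary F_her BL); rewrite !subUset !sub1set zB pB qB.
have C3 : #|[set z; p; q]| = 3%N.
  by rewrite -setUA cardsU1 cards2 pq !inE negb_or !(eq_sym z) pz qz.
by move: z_notin_Y; rewrite -(link_card3_eq CL C3) !inE eqxx.
Qed.

Lemma link_sub_shape : link F x \subset link_shape Y z.
Proof.
apply/subsetP => B BL; have BzY := link_sub_zY BL; rewrite !inE.
have [zB | zB] := boolP (z \in B); last first.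
  by rewrite -(setU1K z_notin_Y) subsetD1 BzY zB.
have BDY : B :\ z \subset Y by rewrite -(setU1K z_notin_Y) setSD.
set S := B :\ z in BDY *; rewrite -(setD1K zB) -/S.
case: (posnP #|S|) => [/cards0_eq -> | S1]; first by rewrite setU0 eqxx orbT.
have /cards1P [y SE] : #|S| == 1%N by rewrite eqn_leq link_setD1z_card_le1.
apply/orP; right; apply/imsetP; exists y; last by rewrite SE setUC.
by apply: (subsetP BDY); rewrite SE set11.
Qed.

Lemma link_eq : link F x = link_shape Y z.
Proof.
apply/eqP; rewrite eqEcard link_sub_shape card_link_shape ?z_notin_Y // card_Y.
exact: leq_trans deg_x.
Qed.

Lemma xz_in_F : [set x; z] \in F.
Proof.
have : [set z] \in link F x by rewrite link_eq !inE eqxx orbT.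
by rewrite mem_link => /andP [].
Qed.

Lemma xyz_in_F y : y \in Y -> [set x; y; z] \in F.
Proof.
move=> yY; have : [set y; z] \in link F x.
  by rewrite link_eq inE; apply/orP; right; apply: imset_f.
by rewrite mem_link setUA => /andP [].
Qed.

Lemma nbhd_x_sub_z : nbhd F x \subset nbhd F z.
Proof.
apply: subset_trans nbhd_x _; apply/subsetP => w; rewrite !in_setU1.
case/or3P => [/eqP -> | /eqP -> | wY].
- by apply: (mem_nbhd xz_in_F); rewrite !inE eqxx ?orbT.
- by apply: (mem_nbhd xz_in_F); rewrite !inE eqxx ?orbT.
- by apply: (mem_nbhd (xyz_in_F wY)); rewrite !inE eqxx ?orbT.
Qed.

Lemma nbhd_x_sub_Y y : y \in Y -> nbhd F x \subset nbhd F y.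
Proof.
move=> yY; apply: subset_trans nbhd_x _; apply/subsetP => w; rewrite !in_setU1.
case/or3P => [/eqP -> | /eqP -> | wY].
- by apply: (mem_nbhd Q_in_F); rewrite !inE ?eqxx ?yY ?orbT.
- by apply: (mem_nbhd (xyz_in_F yY)); rewrite !inE eqxx ?orbT.
- by apply: (mem_nbhd Q_in_F); rewrite !inE ?yY ?wY ?orbT.
Qed.

Lemma Y_neq_x y : y \in Y -> y != x.
Proof. by move=> yY; apply: contraNneq x_notin_Y => <-. Qed.

Lemma Y_neq_z y : y \in Y -> y != z.
Proof. by move=> yY; apply: contraNneq z_notin_Y => <-. Qed.

Lemma zY_neq_x w : w \in z |: Y -> w != x.
Proof. by rewrite in_setU1 => /orP [/eqP -> | /Y_neq_x //]; rewrite eq_sym x_neq_z. Qed.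

(* [y |: T0] would be a second 4-set of [F] through [x]. *)
Lemma Y_link_triangle_notin_x y T0 : y \in Y ->
  T0 \in link F y -> #|T0| = 3%N -> T0 != (x |: Y) :\ y -> x \notin T0.
Proof.
move=> yY; rewrite mem_link => /andP [yT0 FyT0] T03; apply: contraNN => xT0.
have /eqP <- : y |: T0 == x |: Y by rewrite -QxE FyT0 cardsU1 yT0 T03 setU1r.
by rewrite setU1K.
Qed.

Lemma Y_link_pairs y : y \in Y ->
  [set [set w; x] | w in z |: (Y :\ y)] \subset [set A in link F y | #|A| == 2%N].
Proof.
move=> yY; apply/subsetP => _ /imsetP [w wP ->].
rewrite inE cards2 zY_neq_x ?(subsetP (setUS _ (subD1set Y y))) // andbT mem_link.
move: wP; rewrite !inE negb_or (Y_neq_x yY) andbT => /orP [/eqP -> | /andP [wy wY]].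
  rewrite (Y_neq_z yY); apply: (F_her (xyz_in_F yY)).
  by rewrite !subUset !sub1set !inE !eqxx !orbT.
rewrite eq_sym wy; apply: (F_her Q_in_F).
by rewrite !subUset !sub1set !inE yY wY !eqxx !orbT.
Qed.

Lemma card_Y_link_pairs y : y \in Y -> #|[set [set w; x] | w in z |: (Y :\ y)]| = 3%N.
Proof.
move=> yY; rewrite card_in_imset; last first.
  move=> w1 w2 /(subsetP (setUS _ (subD1set Y y))) w1x _.
  exact/set2l_inj/zY_neq_x.
rewrite cardsU1 in_setD1 (negbTE z_notin_Y) andbF.
by move: card_Y; rewrite (cardsD1 y) yY add1n => -[->].
Qed.

Lemma Y_not_mini_weight y : y \in Y -> ~~ mini_weight F y.
Proof.
move=> yY; apply/negP => /and3P [_ /eqP f2_y /eqP f3_y].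
set S := (x |: Y) :\ y.
have S_link : S \in link F y by rewrite mem_link setD11 setD1K ?Q_in_F ?setU1r.
have S3 : #|S| = 3%N by move: card_Q; rewrite (cardsD1 y) setU1r // add1n => -[].
have [T0 [T0_link T03 T0S]] : exists T0, [/\ T0 \in link F y, #|T0| = 3%N & T0 != S].
  have : (0 < #|[set A in link F y | #|A| == 3%N] :\ S|)%N.
    by move: f3_y; rewrite /fi (cardsD1 S) inE S_link S3 eqxx /= add1n => -[->].
  by case/card_gt0P => T0; rewrite !inE => /and3P [? ? /eqP ?]; exists T0.
have xT0 := Y_link_triangle_notin_x yY T0_link T03 T0S.
set E := [set e : {set T} | e \subset T0 & #|e| == 2%N].
set P := [set [set w; x] | w in z |: (Y :\ y)].
have E_link : E \subset [set A in link F y | #|A| == 2%N].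
  apply/subsetP => e; rewrite !inE => /andP [eT0 ->]; rewrite andbT.
  exact: (link_hereditary F_her T0_link).
have EP : [disjoint E & P].
  rewrite disjoints_subset; apply/subsetP => e; rewrite !inE => /andP [eT0 _].
  apply/imsetP => -[w _ eE]; apply/negP: xT0; rewrite negbK.
  by apply: (subsetP eT0); rewrite eE !inE eqxx orbT.
have : (#|E :|: P| <= 5)%N.
  by rewrite -f2_y; apply/subset_leq_card; rewrite subUset E_link Y_link_pairs.
rewrite cardsU (disjoint_setI0 EP) cards0 subn0 cards_draws T03.
by rewrite card_Y_link_pairs.
Qed.

Lemma cQ_eq0 : cQ F (x |: Y) = 0%N.
Proof.
apply/eqP; rewrite /cQ cards_eq0; apply/eqP/setP => v; rewrite !inE.
have [-> | _] := eqVneq v x; rewrite /=; first by rewrite /mini_weight f3_x /= !andbF.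
by case vY: (v \in Y); rewrite /= ?(negbTE (Y_not_mini_weight vY)).
Qed.

Lemma degS_xz_le4 : (degS F [set x; z] <= 4)%N.
Proof.
have xz : x \notin [set z] by rewrite inE x_neq_z.
have sub : [set B in link_shape Y z | [set z] \subset B]
           \subset [set z] |: [set [set y; z] | y in Y].
  apply/subsetP => B; rewrite !inE sub1set -orbA => /andP [/orP [BY | //] zB].
  by move: z_notin_Y; rewrite (subsetP BY).
rewrite degS_link // link_eq (leq_trans (subset_leq_card sub)) //.
by rewrite card_set1_pairs ?z_notin_Y // card_Y.
Qed.

Lemma degS_xy_gt4 y : y \in Y -> (4 < degS F [set x; y])%N.
Proof.
move=> yY; have xy : x \notin [set y] by rewrite inE eq_sym Y_neq_x.
have sub : [set y; z] |: [set B in powerset Y | y \in B]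
           \subset [set B in link_shape Y z | [set y] \subset B].
  apply/subsetP => B; rewrite !inE => /orP [/eqP -> | /andP [BY yB]].
    by rewrite sub1set set21 andbT; apply/orP; right; apply: imset_f.
  by rewrite BY sub1set yB.
rewrite degS_link // link_eq; apply: leq_trans (subset_leq_card sub).
have yzY : ~~ ([set y; z] \subset Y).
  by apply: contraNN z_notin_Y => /subsetP; apply; rewrite set22.
by rewrite cardsU1 card_powerset_mem // card_Y inE powersetE (negbTE yzY).
Qed.

Lemma xyz_free y :
  ~~ [exists B in F, ([set x; y; z] \subset B) && (#|B| == 4%N)].
Proof.
apply/existsP => -[B /andP [FB /andP [sB B4]]].
have /eqP BQ : B == x |: Y by rewrite -QxE FB B4 (subsetP sB) // !inE eqxx.
by move: z_notin_Q; rewrite -BQ (subsetP sB) // !inE eqxx orbT.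
Qed.

Local Open Scope ring_scope.

Lemma omega_xyz y : y \in Y -> omega F x [set x; y; z] = 7 / 20.
Proof.
move=> yY; apply: omega_triangle_heavy_light (xyz_free y) (degS_xy_gt4 yY) degS_xz_le4.
- by rewrite eq_sym Y_neq_x.
- exact: x_neq_z.
- exact: Y_neq_z.
Qed.

Lemma weight_x : weight F x = 53 / 10.
Proof.
rewrite weight_link link_eq /link_shape -setUA.
rewrite (eq_bigl [predU powerset Y & [set z] |: [set [set y; z] | y in Y]]);
  last by move=> B; rewrite in_setU.
rewrite bigU ?disjoint_link_shape ?z_notin_Y //= big_setU1 ?set1_notin_pairs ?z_notin_Y //=.
rewrite big_imset /=; last exact: pairs_inj z_notin_Y.
have -> : \sum_(B in powerset Y) omega F x (x |: B)
          = \sum_(B in powerset Y) (#|B|.+1)%:R^-1.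
  apply: eq_bigr => B; rewrite powersetE => BY.
  rewrite (omega_sub_card4 _ Q_in_F card_Q) ?setUS // cardsU1.
  by rewrite (contraNN (subsetP BY x) x_notin_Y).
under eq_bigr => y yY do rewrite setUA omega_xyz //.
rewrite (sum_powerset_card _ (fun k => (k.+1)%:R^-1)) sumr_const card_Y.
have xz2 : #|[set x; z]| = 2%N by rewrite cards2 x_neq_z.
by rewrite omega_card_neq3 xz2 // !big_ord_recr big_ord0.
Qed.

End Configuration.

Theorem mainTheorem10 (T : finType) (F : {set {set T}}) (x y1 y2 y3 z : T) :
  minimal12 F ->
  fi F 3 x = 1%N -> fi F 1 x = 4%N ->
  Qx F x = [set [set x; y1; y2; y3]] ->
  nbhd F x = [set x; y1; y2; y3; z] ->
  [/\ link F x = powerset [set y1; y2; y3] :|: [set [set z]]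
                 :|: [set [set y1; z]; [set y2; z]; [set y3; z]],
      nbhd F x \subset nbhd F z,
      (forall y, y \in [set y1; y2; y3] -> nbhd F x \subset nbhd F y),
      cQ F [set x; y1; y2; y3] = 0%N &
      weight F x = (53 / 10)%R].
Proof.
move=> [F_her min_deg _] f3_x _ Qx_x nbhd_x; have deg_x := min_deg x.
have QE : [set x; y1; y2; y3] = x |: [set y1; y2; y3] by rewrite !setUA.
have card_Y_le3 : (#|[set y1; y2; y3]| <= 3)%N.
  by rewrite -setUA cardsU1 cards2; case: (_ \notin _); case: (_ != _).
have {}nbhd_x : nbhd F x \subset x |: (z |: [set y1; y2; y3]).
  by rewrite nbhd_x; apply/subsetP => w; rewrite !inE; do !case: (_ == _).
rewrite QE in Qx_x *; split.
- rewrite (link_eq F_her deg_x f3_x card_Y_le3 Qx_x nbhd_x) /link_shape.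
  by rewrite !imsetU !imset_set1.
- exact: nbhd_x_sub_z F_her deg_x f3_x card_Y_le3 Qx_x nbhd_x.
- exact: nbhd_x_sub_Y F_her deg_x f3_x card_Y_le3 Qx_x nbhd_x.
- exact: cQ_eq0 F_her deg_x f3_x card_Y_le3 Qx_x nbhd_x.
- exact: weight_x F_her deg_x f3_x card_Y_le3 Qx_x nbhd_x.
Qed.
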